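(* Let $n,k,t$ be positive integers with $k\cdot t=\frac{n(n+1)}{2}$ and $t\ge n$. Then the recursive procedure $\Pi\mathit{Solve}$ (defined in the context) terminates on input $(n,k,t)$ and outputs sets $T_1,\ldots,T_k$ which are pairwise disjoint, satisfy $\{1,\ldots,n\}\subseteq \bigcup_{j=1}^k T_j\subseteq\{0,1,\ldots,n\}$, and satisfy $\sum_{x\in T_j}x=t$ for every $1\le j\le k$. Consequently the sets $T_j\setminus\{0\}$, $1\le j\le k$, form a $(k,t)$-partitioning of $\{1,\ldots,n\}$.
   Context: For integers $n,k,t$, a $(k,t)$-partitioning of $\{1,\ldots,n\}$ is a family of $k$ pairwise disjoint sets $T_1,\ldots,T_k$ with union $\{1,\ldots,n\}$ and $\sum_{x\in T_j}x=t$ for all $j$. The procedure $\Pi\mathit{Solve}(n,k,t)$ returns a list of $k$ sets and is defined recursively as follows. (Base cases.) If $k=0$, return the empty list. If $k=1$, return the single set $\{1,\ldots,n\}$ (empty if $n\le 0$). (Case $t\le 2n-1$, $t$ even.) Let $a=\frac{2n-t}{2}$. For $1\le i\le a$ put $T_i=\{t-n+(i-1),\,n-(i-1)\}$. Let $n'=t-n-1$, $k'=2(k-n)+t-1$, $t'=t/2$, and let $(S_1,\ldots,S_{k'})=\Pi\mathit{Solve}(n',k',t')$. Put $T_{a+1}=\{t/2\}\cup S_1$ and, for $2\le m\le k-a$, $T_{a+m}=S_{2m-2}\cup S_{2m-1}$. Return $(T_1,\ldots,T_k)$. (Case $t\le 2n-1$, $t$ odd.) Let $a=\frac{2n-t+1}{2}$.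 For $1\le i\le a$ put $T_i=\{t-n+(i-1),\,n-(i-1)\}$. Let $(S_1,\ldots,S_{k-a})=\Pi\mathit{Solve}(t-n-1,\,k-a,\,t)$ and put $T_{a+m}=S_m$ for $1\le m\le k-a$. Return $(T_1,\ldots,T_k)$. (Case $t\ge 2n$.) Let $(S_1,\ldots,S_k)=\Pi\mathit{Solve}(n-2k,\,k,\,t-2(n-k)-1)$ and put $T_i=\{n-2k+i,\,n-(i-1)\}\cup S_i$ for $1\le i\le k$. Return $(T_1,\ldots,T_k)$. *)

From HB Require Import structures.
From mathcomp Require Import all_boot all_order all_algebra.
From mathcomp Require Import finmap.
Set Implicit Arguments. Unset Strict Implicit. Unset Printing Implicit Defensive.
Import Order.TTheory GRing.Theory Num.Theory.
Local Open Scope fset_scope.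
Local Open Scope ring_scope.

Definition ton (z : int) : nat := if z is Posz m then m else 0%N.

Definition irange (lo hi : int) : seq int :=
  [seq lo + (i%:Z) | i <- iota 0 (ton (hi - lo + 1))].

(* 1-based access S_j to a list of sets (empty set if out of range) *)
Definition snth (S : seq {fset int}) (j : int) : {fset int} :=
  nth fset0 S (ton (j - 1)).

Definition upto (n : int) : {fset int} := [fset x | x in irange 1 n].

(* Big-step semantics of the recursive procedure PiSolve(n,k,t):
   [PiSolve n k t T] means that the call PiSolve(n,k,t) terminates and returns
   the list T = (T_1, ..., T_k).  The procedure is deterministic, so the
   existence of a derivation is exactly termination. *)
Inductive PiSolve : int -> int -> int -> seq {fset int} -> Prop :=
| PS_k0 (n t : int) : PiSolve n 0 t [::]
| PS_k1 (n t : int) : PiSolve n 1 t [:: upto n]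
| PS_even (n k t : int) (S : seq {fset int}) :
    k != 0 -> k != 1 -> t <= 2 * n - 1 -> (2 %| t)%Z ->
    let a := ((2 * n - t) %/ 2)%Z in
    PiSolve (t - n - 1) (2 * (k - n) + t - 1) (t %/ 2)%Z S ->
    PiSolve n k t
      ([seq [fset t - n + (i - 1); n - (i - 1)] | i <- irange 1 a]
       ++ [:: [fset (t %/ 2)%Z] `|` snth S 1]
       ++ [seq snth S (2 * m - 2) `|` snth S (2 * m - 1) | m <- irange 2 (k - a)])
| PS_odd (n k t : int) (S : seq {fset int}) :
    k != 0 -> k != 1 -> t <= 2 * n - 1 -> ~~ (2 %| t)%Z ->
    let a := ((2 * n - t + 1) %/ 2)%Z in
    PiSolve (t - n - 1) (k - a) t S ->
    PiSolve n k t
      ([seq [fset t - n + (i - 1); n - (i - 1)] | i <- irange 1 a]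
       ++ [seq snth S m | m <- irange 1 (k - a)])
| PS_big (n k t : int) (S : seq {fset int}) :
    k != 0 -> k != 1 -> 2 * n <= t ->
    PiSolve (n - 2 * k) k (t - 2 * (n - k) - 1) S ->
    PiSolve n k t
      [seq [fset n - 2 * k + i; n - (i - 1)] `|` snth S i | i <- irange 1 k].

Definition partitioning (n k t : int) (T : seq {fset int}) : Prop :=
  [/\ (size T)%:Z = k,
      (forall i j : nat, (i < j < size T)%N ->
          nth fset0 T i `&` nth fset0 T j = fset0),
      (forall x : int, (exists2 j : nat, (j < size T)%N & x \in nth fset0 T j)
                       <-> (1 <= x <= n)) &
      (forall j : nat, (j < size T)%N -> \sum_(x <- nth fset0 T j) x = t)].

From HB Require Import structures.
From mathcomp Require Import all_boot all_order all_algebra.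
From mathcomp Require Import finmap zify.
Import Order.TTheory GRing.Theory Num.Theory.
Local Open Scope fset_scope.
Local Open Scope ring_scope.

(* Every call of PiSolve removes the largest numbers by pairing them into blocks
   {c + i - 1, n - i + 1}, all of sum c + n = t (when t >= 2n such a pair is instead
   added to every block of a smaller instance), and recurses on an instance
   (n', k', t') with n' < n that again satisfies 2 k' t' = n' (n' + 1).  In the even
   case the middle number t/2 joins S_1 and the other blocks S_j, of sum t/2, are
   merged two by two.  Induction on the derivation then carries the invariant
   [partitioning0]: each of 1..n lies in exactly one block, 0 in at most one,
   nothing else in any block, and every block sums to t. *)

Lemma ton_spec (z : int) : (0 <= z /\ (ton z)%:Z = z) \/ (z <= 0 /\ ton z = 0%N).
Proof. by case: z => m /=; [left | right]; split => //; lia. Qed.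

Lemma tonE (z : int) (m : nat) : z = m%:Z -> ton z = m.
Proof. by move->. Qed.

Lemma mem_irange (lo hi x : int) : (x \in irange lo hi) = (lo <= x <= hi).
Proof.
apply/mapP/idP => [[i] | hx].
  by rewrite mem_iota add0n => /andP[_]; case: (ton_spec (hi - lo + 1)); lia.
exists (ton (x - lo)); last by case: (ton_spec (x - lo)); lia.
by rewrite mem_iota add0n; case: (ton_spec (hi - lo + 1)); case: (ton_spec (x - lo)); lia.
Qed.

Lemma uniq_irange (lo hi : int) : uniq (irange lo hi).
Proof. by rewrite map_inj_uniq ?iota_uniq // => i j; lia. Qed.

Lemma size_irange1 (a : int) : 0 <= a -> (size (irange 1 a))%:Z = a.
Proof. by rewrite size_map size_iota subrK; case: a. Qed.

Lemma mem_upto (n x : int) : (x \in upto n) = (1 <= x <= n).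
Proof. by rewrite inE mem_irange. Qed.

Lemma sum_upto (n : int) : 0 <= n -> (\sum_(x <- upto n) x) * 2 = n * (n + 1).
Proof.
case: n => // m _; rewrite (perm_big (irange 1 m)); last first.
  by apply: uniq_perm; rewrite ?fset_uniq ?uniq_irange // => x; rewrite mem_upto mem_irange.
rewrite /irange addrK big_map.
elim: m => [|m IH]; first by rewrite big_nil.
by rewrite -addn1 iotaD big_cat big_seq1 /= mulrDl IH; lia.
Qed.

Lemma map_snth_irange {S : seq {fset int}} {K : int} : (size S)%:Z = K ->
  [seq snth S m | m <- irange 1 K] = S.
Proof.
move=> <-; rewrite /irange addrK -map_comp -[RHS](mkseq_nth fset0).
by apply: eq_map => i /=; rewrite /snth addrC addKr.
Qed.

Lemma sum_fsetU_disjoint (I : choiceType) (R : nmodType) (F : I -> R) (A B : {fset I}) :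
  (forall x, x \in A -> x \notin B) ->
  \sum_(x <- A `|` B) F x = \sum_(x <- A) F x + \sum_(x <- B) F x.
Proof.
move=> AB; rewrite (big_fsetID _ (mem A)) /=; congr (_ + _); apply: eq_fbigl => x;
  rewrite !inE /=.
- by case: (x \in A); rewrite ?andbT ?andbF ?orbT.
- by case xA: (x \in A); rewrite ?andbT //= (negbTE (AB x xA)).
Qed.

Lemma sum_fsetD1_eq0 (I : choiceType) (R : nmodType) (F : I -> R) (A : {fset I}) (a : I) :
  F a = 0 -> \sum_(x <- A `\ a) F x = \sum_(x <- A) F x.
Proof.
move=> Fa0; have [aA|aA] := boolP (a \in A); first by rewrite [RHS](big_fsetD1 _ aA) /= Fa0 add0r.
by rewrite mem_fsetD1.
Qed.

Section Multiplicity.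
Context {I : choiceType}.
Implicit Types (s A B : seq {fset I}) (U V : {fset I}) (x : I).

Definition mult s x : nat := count (fun U => x \in U) s.

Lemma mult_cat A B x : mult (A ++ B) x = (mult A x + mult B x)%N.
Proof. exact: count_cat. Qed.

Lemma mult_gt0P s x :
  reflect (exists2 j, (j < size s)%N & x \in nth fset0 s j) (0 < mult s x)%N.
Proof. by rewrite -has_count; apply: has_nthP. Qed.

Lemma mem_mult {s U x} : U \in s -> x \in U -> (0 < mult s x)%N.
Proof. by move=> Us xU; rewrite -has_count; apply/hasP; exists U. Qed.

Lemma disjoint_nth_mult s : (forall x, mult s x <= 1)%N ->
  forall i j, (i < j < size s)%N -> nth fset0 s i `&` nth fset0 s j = fset0.
Proof.
move=> mult_le1 i j /andP[ij js]; apply/fsetP => x; rewrite !inE.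
apply/negP => /andP[xi xj]; have := mult_le1 x.
rewrite /mult -(cat_take_drop j s) count_cat (drop_nth fset0 js) /= xj.
have : (0 < mult (take j s) x)%N.
  by apply/mult_gt0P; exists i; rewrite ?nth_take // size_take js.
rewrite /mult; lia.
Qed.

Lemma mult_fsetD1 s a x : mult [seq U `\ a | U <- s] x = ((x != a) * mult s x)%N.
Proof.
rewrite /mult count_map; case: eqVneq => [->|xa] /=.
  by apply/eqP; rewrite -leqn0 leqNgt -has_count; apply/hasPn => U _; rewrite !inE eqxx.
by rewrite mul1n; apply: eq_count => U; rewrite /= in_fsetD1 xa.
Qed.

Fixpoint pairup s : seq {fset I} :=
  if s is U :: V :: s' then (U `|` V) :: pairup s' else [::].

Lemma pairup_ind (P : seq {fset I} -> Prop) : P [::] -> (forall U, P [:: U]) ->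
  (forall U V s, P s -> P [:: U, V & s]) -> forall s, P s.
Proof.
move=> P0 P1 P2; fix IH 1; case=> [|U [|V s]];
  [exact: P0 | exact: P1 | exact: P2 (IH s)].
Qed.

Lemma size_pairup s : size (pairup s) = (size s)./2.
Proof. by elim/pairup_ind: s => //= U V s ->. Qed.

Lemma pairupE {s} : ~~ odd (size s) ->
  [seq nth fset0 s (2 * j) `|` nth fset0 s (2 * j).+1 | j <- iota 0 (size s)./2] = pairup s.
Proof.
elim/pairup_ind: s => //= U V s IH; rewrite negbK => /IH <-; congr (_ :: _).
by rewrite (iotaDl 1 0) -map_comp; apply: eq_map => j; rewrite /comp mulnDr muln1.
Qed.

Lemma mult_pairup s x : ~~ odd (size s) -> (mult s x <= 1)%N ->
  mult (pairup s) x = mult s x.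
Proof.
elim/pairup_ind: s => //= U V s IH; rewrite negbK /mult /= in_fsetU -/(mult _ x) -/(mult _ x).
by move=> {}/IH IH; case: (x \in U); case: (x \in V) => /=; lia.
Qed.

Lemma sum_pairup {R : nmodType} {F : I -> R} {h : R} {s} :
  (forall x, mult s x <= 1)%N -> (forall U, U \in s -> \sum_(x <- U) F x = h) ->
  forall U, U \in pairup s -> \sum_(x <- U) F x = h + h.
Proof.
elim/pairup_ind: s => //= U V s IH mult_le1 sum_h W; rewrite inE => /orP[/eqP->|Ws].
  rewrite sum_fsetU_disjoint ?sum_h ?inE ?eqxx ?orbT // => x xU.
  by apply/negP => xV; have := mult_le1 x; rewrite /mult /= xU xV.
apply: IH Ws => [x | W' W's]; last by apply: sum_h; rewrite !inE W's !orbT.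
by have := mult_le1 x; rewrite /mult /=; case: (x \in U); case: (x \in V) => /=; lia.
Qed.

Definition zipU A B : seq {fset I} := [seq p.1 `|` p.2 | p <- zip A B].

Lemma mult_zipU A B x : size A = size B -> mult A x = 0%N \/ mult B x = 0%N ->
  mult (zipU A B) x = (mult A x + mult B x)%N.
Proof.
elim: A B => [|U A IH] [|V B] //= [/IH {}IH]; rewrite /mult /= in_fsetU.
rewrite -/(zipU A B) -!/(mult _ x) => AB0; rewrite IH; last lia.
by case: (x \in U) AB0; case: (x \in V) => /=; lia.
Qed.

Lemma sum_zipU {R : nmodType} {F : I -> R} {a b : R} {A B} :
  (forall x, mult A x = 0%N \/ mult B x = 0%N) ->
  (forall U, U \in A -> \sum_(x <- U) F x = a) ->
  (forall V, V \in B -> \sum_(x <- V) F x = b) ->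
  forall W, W \in zipU A B -> \sum_(x <- W) F x = a + b.
Proof.
elim: A B => [|U A IH] [|V B] //= AB sumA sumB W; rewrite inE => /orP[/eqP->|WAB].
  rewrite sum_fsetU_disjoint ?(sumA U) ?(sumB V) ?mem_head // => x xU; apply/negP => xV.
  by have := AB x; rewrite /mult /= xU xV; lia.
apply: IH WAB => [x | U' U'A | V' V'B].
- by have := AB x; rewrite /mult /=; lia.
- by apply: sumA; rewrite inE U'A orbT.
- by apply: sumB; rewrite inE V'B orbT.
Qed.

End Multiplicity.

Lemma map_snth_pairs (s1 : {fset int}) (R : seq {fset int}) (K : int) :
  (size R)%:Z = 2 * (K - 1) ->
  [seq snth (s1 :: R) (2 * m - 2) `|` snth (s1 :: R) (2 * m - 1) | m <- irange 2 K]
  = pairup R.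
Proof.
move=> sizeR; have evenR : ~~ odd (size R) by lia.
rewrite -(pairupE evenR) /irange -map_comp (@tonE _ (size R)./2); last lia.
apply: eq_map => j /=; rewrite /snth.
have -> : ton (2 * (2 + j%:Z) - 2 - 1) = (2 * j).+1 by apply: tonE; lia.
by have -> : ton (2 * (2 + j%:Z) - 1 - 1) = (2 * j).+2 by apply: tonE; lia.
Qed.

Lemma map_fsetU_snth (f : int -> {fset int}) (S : seq {fset int}) (K : int) :
  (size S)%:Z = K ->
  [seq f i `|` snth S i | i <- irange 1 K] = zipU [seq f i | i <- irange 1 K] S.
Proof. by move=> sizeS; rewrite -[in RHS](map_snth_irange sizeS) /zipU zip_map -map_comp. Qed.

Definition pairs (c n a : int) : seq {fset int} :=
  [seq [fset c + (i - 1); n - (i - 1)] | i <- irange 1 a].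

Lemma mult_pairs (c n a x : int) : 2 * a <= n - c + 1 ->
  mult (pairs c n a) x = ((c <= x <= c + a - 1)%R + (n - a + 1 <= x <= n)%R)%N.
Proof.
move=> ha; rewrite /mult /pairs count_map.
rewrite (@eq_count _ _ (predU (pred1 (x - c + 1)) (pred1 (n - x + 1)))); last first.
  by move=> i /=; rewrite !inE; apply/orP/orP => -[] /eqP e; [left|right|left|right]; apply/eqP; lia.
have := count_predUI (pred1 (x - c + 1)) (pred1 (n - x + 1)) (irange 1 a).
rewrite (@eq_in_count _ (predI _ _) pred0) ?count_pred0 => [|i]; last first.
  by rewrite mem_irange /= => hi; apply/andP => -[/eqP iu /eqP iv]; lia.
rewrite !count_uniq_mem ?uniq_irange // !mem_irange addn0 => ->; lia.
Qed.

Lemma sum_pairs {c n a : int} {U : {fset int}} : 2 * a <= n - c + 1 ->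
  U \in pairs c n a -> \sum_(x <- U) x = c + n.
Proof.
move=> ha /mapP[i]; rewrite mem_irange => hi ->.
by rewrite big_fsetU1 ?big_seq_fset1 ?inE /=; [lia | apply/eqP; lia].
Qed.

(* The recursion reaches n = -1, namely from t = n. *)
Definition admissible (n k t : int) : Prop :=
  [/\ 1 <= t, n <= t, -1 <= n, 0 <= k & k * t * 2 = n * (n + 1)].

Lemma admissible_k0 {n t} : admissible n 0 t -> n <= 0.
Proof.
case=> _ _ n1 _; rewrite !mul0r => /esym /eqP; rewrite mulf_eq0 => /orP[] /eqP; lia.
Qed.

Lemma admissible_n_ge1 {n k t} : admissible n k t -> k != 0 -> 1 <= n.
Proof.
case=> t1 _ n1 k0 e /eqP kn0; have kt1 : 1 <= k * t by apply: mulr_ege1; lia.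
have [//|[n0|n0]] : 1 <= n \/ n = 0 \/ n = -1 by lia.
all: by move: e; rewrite n0; lia.
Qed.

Lemma admissible_big {n k t} : admissible n k t -> 0 < k -> 2 * n <= t ->
  admissible (n - 2 * k) k (t - 2 * (n - k) - 1) /\ 2 * k < n.
Proof.
move=> [t1 nt n1 k0 e] k1 tn.
have n0 : 1 <= n by apply: admissible_n_ge1 (And5 t1 nt n1 k0 e) _; lia.
have kn : 4 * k <= n + 1 by nia.
have : 0 <= (n - 2 * k) * (n - 4 * k + 1) by nia.
have : 3 * n - 4 * k + 1 <= t by nia.
by split; [split|]; nia.
Qed.

Lemma mulr_succ_ge0 (m : int) : -1 <= m -> 0 <= m * (m + 1).
Proof.
have [m0 m1|m0 _] := ltrP m 0; last by rewrite mulr_ge0 // addr_ge0.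
by have -> : m = -1 by lia.
Qed.

Lemma admissible_even {n k t h} : admissible n k t -> t <= 2 * n - 1 -> t = 2 * h ->
  admissible (t - n - 1) (2 * (k - n) + t - 1) h /\ 0 < 2 * (k - n) + t - 1.
Proof.
move=> [t1 nt n1 k0 e] tn th.
have e' : (2 * (k - n) + t - 1) * h * 2 = (t - n - 1) * (t - n - 1 + 1).
  by rewrite th; nia.
have p0 : 0 <= (t - n - 1) * (t - n - 1 + 1) by apply: mulr_succ_ge0; lia.
have k'0 : 0 <= 2 * (k - n) + t - 1 by nia.
split; first by split; lia.
rewrite lt_neqAle k'0 andbT; apply/eqP => k'e; move: e'; rewrite -k'e !mul0r.
move/esym/eqP; rewrite mulf_eq0 => /orP[] /eqP tn'.
- have en : n = 2 * h - 1 by lia.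
  have : 2 * h * (2 * k - 2 * h + 1) = 0 by move: e; rewrite en th; nia.
  by move/eqP; rewrite mulf_eq0 => /orP[] /eqP; lia.
- have en : n = 2 * h by lia.
  have : 2 * h * (2 * k - 2 * h - 1) = 0 by move: e; rewrite en th; nia.
  by move/eqP; rewrite mulf_eq0 => /orP[] /eqP; lia.
Qed.

Lemma admissible_odd {n k t h} : admissible n k t -> t = 2 * h + 1 ->
  admissible (t - n - 1) (k - (n - h)) t.
Proof.
move=> [t1 nt n1 k0 e] th.
have e' : (k - (n - h)) * t * 2 = (t - n - 1) * (t - n - 1 + 1) by rewrite th; nia.
have : 0 <= (t - n - 1) * (t - n - 1 + 1) by apply: mulr_succ_ge0; lia.
by split; try lia; nia.
Qed.

Lemma PiSolve_exists (N : nat) (n k t : int) : n < N%:Z -> admissible n k t ->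
  exists T, PiSolve n k t T.
Proof.
elim: N => [|N IH] in n k t *; move=> nN hA; have [->|k0] := eqVneq k 0;
  try by exists [::]; constructor.
  by have := admissible_n_ge1 hA k0; lia.
have [->|k1] := eqVneq k 1; first by eexists; constructor.
have k2 : 1 < k by case: hA; lia.
have [tn|nt] := lerP (2 * n) t.
  have [hA' _] := admissible_big hA (ltW k2) tn.
  by have [|S HS] := IH _ _ _ _ hA'; [lia | eexists; apply: PS_big k0 k1 tn HS].
have tn : t <= 2 * n - 1 by lia.
have [t2|t2] := boolP (2 %| t)%Z.
  have th : t = 2 * (t %/ 2)%Z by lia.
  have [hA' _] := admissible_even hA tn th.
  by have [|S HS] := IH _ _ _ _ hA'; [case: hA; lia | eexists; apply: PS_even k0 k1 tn t2 HS].
have ha : ((2 * n - t + 1) %/ 2)%Z = n - (t %/ 2)%Z by lia.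
have th : t = 2 * (t %/ 2)%Z + 1 by lia.
have := admissible_odd hA th; rewrite -ha => hA'.
by have [|S HS] := IH _ _ _ _ hA'; [case: hA; lia | eexists; apply: PS_odd k0 k1 tn t2 HS].
Qed.

(* Blocks may contain 0: when t = n the first block of [pairs (t - n) n _] is {0, n}. *)
Definition partitioning0 (n k t : int) (T : seq {fset int}) : Prop :=
  [/\ (size T)%:Z = k,
      forall x, ((0 < x <= n)%R <= mult T x <= (0 <= x <= n)%R)%N &
      forall U, U \in T -> \sum_(x <- U) x = t].

Lemma partitioning0_mem {n k t T U x} : partitioning0 n k t T ->
  U \in T -> x \in U -> 0 <= x <= n.
Proof. by case=> _ multT _ UT /(mem_mult UT); have := multT x; lia. Qed.

Lemma partitioning0_nil n t : n <= 0 -> partitioning0 n 0 t [::].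
Proof. by split => // x; rewrite /mult /=; lia. Qed.

Lemma partitioning0_upto n t : 0 <= n -> t * 2 = n * (n + 1) ->
  partitioning0 n 1 t [:: upto n].
Proof.
move=> n0 tn; split=> // [x | U]; first by rewrite /mult /= mem_upto; lia.
by rewrite inE => /eqP->; have := sum_upto n n0; lia.
Qed.

Lemma partitioning0_odd n k t h S : n <= t -> t <= 2 * n - 1 -> t = 2 * h + 1 ->
  partitioning0 (t - n - 1) (k - (n - h)) t S ->
  partitioning0 n k t (pairs (t - n) n (n - h) ++ S).
Proof.
move=> nt tn th [sizeS multS sumS].
have ha : 2 * (n - h) <= n - (t - n) + 1 by lia.
split.
- by rewrite size_cat size_map PoszD size_irange1; lia.
- by move=> x; rewrite mult_cat mult_pairs //; have := multS x; lia.
- by move=> U; rewrite mem_cat => /orP[/(sum_pairs ha) | /sumS] ->; lia.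
Qed.

Lemma partitioning0_even n k t h s1 R : n <= t -> t <= 2 * n - 1 -> t = 2 * h ->
  partitioning0 (t - n - 1) (2 * (k - n) + t - 1) h (s1 :: R) ->
  partitioning0 n k t (pairs (t - n) n (n - h) ++ [fset h] `|` s1 :: pairup R).
Proof.
move=> nt tn th P; have s1_small x : x \in s1 -> 0 <= x <= t - n - 1.
  exact: partitioning0_mem P (mem_head _ _).
case: P => /= sizeS multS sumS.
have ha : 2 * (n - h) <= n - (t - n) + 1 by lia.
have evenR : ~~ odd (size R) by lia.
have multR x : (mult R x <= 1)%N by have := multS x; rewrite /mult /=; lia.
have sumR V : V \in R -> \sum_(x <- V) x = h by move=> VR; apply: sumS; rewrite inE VR orbT.
split.
- have := odd_double_half (size R).
  by rewrite size_cat size_map /= size_pairup PoszD size_irange1; lia.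
- move=> x; rewrite mult_cat mult_pairs // /mult /= in_fsetU in_fset1 -/(mult _ x).
  rewrite mult_pairup //; have := multS x; rewrite /mult /= -/(mult _ x).
  by have := s1_small x; case: (x \in s1); lia.
- move=> U; rewrite mem_cat inE => /orP[/(sum_pairs ha) -> | /orP[/eqP-> | UR]]; first lia.
    rewrite sum_fsetU_disjoint ?big_seq_fset1 ?sumS ?mem_head //; first lia.
    by move=> x; rewrite inE => /eqP->; apply/negP => /s1_small; lia.
  by rewrite (sum_pairup multR sumR _ UR); lia.
Qed.

Lemma partitioning0_big n k t S : 2 * k <= n + 1 ->
  partitioning0 (n - 2 * k) k (t - 2 * (n - k) - 1) S ->
  partitioning0 n k t (zipU (pairs (n - 2 * k + 1) n k) S).
Proof.
move=> kn [sizeS multS sumS].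
have ha : 2 * k <= n - (n - 2 * k + 1) + 1 by lia.
have sizeP : size (pairs (n - 2 * k + 1) n k) = size S.
  by apply/eqP; rewrite -eqz_nat size_map size_irange1 ?sizeS; lia.
have disjPS x : mult (pairs (n - 2 * k + 1) n k) x = 0%N \/ mult S x = 0%N.
  by rewrite mult_pairs //; have := multS x; lia.
have sumP V : V \in pairs (n - 2 * k + 1) n k -> \sum_(x <- V) x = n - 2 * k + 1 + n.
  exact: sum_pairs.
split.
- by rewrite size_map size_zip sizeP minnn.
- by move=> x; rewrite mult_zipU // mult_pairs //; have := multS x; lia.
- by move=> U /(sum_zipU disjPS sumP sumS) ->; lia.
Qed.

Lemma PiSolve_partitioning0 n k t T : PiSolve n k t T -> admissible n k t ->
  partitioning0 n k t T.
Proof.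
elim=> {n k t T} [n t | n t | n k t S k0 k1 tn t2 a _ IH | n k t S k0 k1 tn t2 a _ IH |
                  n k t S k0 k1 tn _ IH] hA.
- exact/partitioning0_nil/(admissible_k0 hA).
- have n1 := admissible_n_ge1 hA (oner_neq0 _).
  by case: hA => *; apply: partitioning0_upto; lia.
- have th : t = 2 * (t %/ 2)%Z by lia.
  have [/IH P k'0] := admissible_even hA tn th.
  have -> : a = n - (t %/ 2)%Z by rewrite /a; lia.
  case: S P {IH} => [|s1 R] P; first by case: P => /=; lia.
  rewrite map_snth_pairs; last by case: P => /=; lia.
  by apply: partitioning0_even => //; case: hA.
- have th : t = 2 * (t %/ 2)%Z + 1 by lia.
  have ha : a = n - (t %/ 2)%Z by rewrite /a; lia.
  have := admissible_odd hA th; rewrite -ha => /IH P.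
  rewrite map_snth_irange; last by case: P.
  by rewrite ha; apply: partitioning0_odd => //; [case: hA | rewrite -ha].
- have k_gt0 : 0 < k by case: hA; lia.
  have [/IH P kn] := admissible_big hA k_gt0 tn.
  rewrite map_fsetU_snth; last by case: P.
  rewrite (eq_map (_ : _ =1 fun i => [fset n - 2 * k + 1 + (i - 1); n - (i - 1)])).
    by apply: partitioning0_big P; lia.
  by move=> i; congr ([fset _; _]); lia.
Qed.

Lemma partitioning_fsetD0 n k t T : partitioning0 n k t T ->
  partitioning n k t [seq U `\ 0 | U <- T].
Proof.
case=> sizeT multT sumT; split.
- by rewrite size_map.
- by apply: disjoint_nth_mult => x; rewrite mult_fsetD1; have := multT x; lia.
- move=> x; split=> [/mult_gt0P | x1n]; last apply/mult_gt0P;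
    by rewrite mult_fsetD1; have := multT x; lia.
- move=> j; rewrite size_map => jT.
  by rewrite (nth_map fset0) // sum_fsetD1_eq0 //; apply/sumT/mem_nth.
Qed.

Theorem mainTheorem1 (n k t : nat) :
  (0 < n)%N -> (0 < k)%N -> (0 < t)%N ->
  (k * t = n * (n + 1) %/ 2)%N -> (n <= t)%N ->
  (exists T : seq {fset int}, PiSolve n%:Z k%:Z t%:Z T) /\
  (forall T : seq {fset int}, PiSolve n%:Z k%:Z t%:Z T ->
     size T = k /\
         (forall i j : nat, (i < j < k)%N ->
            nth fset0 T i `&` nth fset0 T j = fset0) /\
         (forall x : int, 1 <= x <= n%:Z ->
            exists2 j : nat, (j < k)%N & x \in nth fset0 T j) /\
         (forall (j : nat) (x : int), (j < k)%N -> x \in nth fset0 T j ->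
            0 <= x <= n%:Z) /\
         (forall j : nat, (j < k)%N -> \sum_(x <- nth fset0 T j) x = t%:Z) /\
         partitioning n%:Z k%:Z t%:Z [seq U `\ 0 | U <- T]).
Proof.
move=> n0 k0 t0 ekt nt.
have hA : admissible n k t.
  have : (n * (n + 1) %/ 2 * 2 = n * (n + 1))%N.
    by rewrite divnK // dvdn2 oddM oddD /=; case: (odd n).
  by split; lia.
split; first by apply: (@PiSolve_exists n.+1) hA; lia.
move=> T /PiSolve_partitioning0 /(_ hA) P; have [sizeT multT sumT] := P.
have {}sizeT : size T = k by lia.
rewrite -sizeT; split=> //; split.
  by apply: disjoint_nth_mult => x; have := multT x; lia.
split; first by move=> x x1n; apply/mult_gt0P; have := multT x; lia.
split; first by move=> j x jT; apply: partitioning0_mem P (mem_nth fset0 jT).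
split; first by move=> j jT; apply/sumT/mem_nth.
by rewrite sizeT; apply: partitioning_fsetD0.
Qed.
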